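(* Let $m$ be even, $\mathcal{A}\in T_{m,n}$, $\mathcal{B}\in S_{m,n}$ positive definite, $F(\mathbf{z})=F(\mathbf{x},t)=(t^2\mathcal{B}-\mathcal{A})\mathbf{x}^{m-1}$, $\tau\in(0,1)$, and let $H_\tau(\mathbf{z})=\begin{pmatrix}\Phi_\tau(\mathbf{z})\\ \mathbf{x}^\top\mathbf{x}-1\end{pmatrix}$ with $\Phi_\tau(\mathbf{z})=[\phi_\tau(x_i,F_i(\mathbf{z}))]_{i=1}^n$. Fix $\mathbf{z}=(\mathbf{x},t)\in\mathbb{R}^{n+1}$ and let $V\in\mathbb{R}^{n\times(n+1)}$ be the matrix produced by Procedure P (see context) with this $\tau$. Suppose $\nabla_{\mathbf{x}}F_i(\mathbf{z})^\top\mathbf{c}\neq0$ for all $i\in S_3$. Then $G=\begin{pmatrix}V\\ 2\mathbf{x}^\top\ \ 0\end{pmatrix}$ belongs to the B-subdifferential $\partial_BH_\tau(\mathbf{z})$.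
   Context: $(\mathcal{A}\mathbf{x}^{m-1})_i=\sum_{i_2,\ldots,i_m}a_{i i_2\ldots i_m}x_{i_2}\cdots x_{i_m}$; $\mathcal{B}$ symmetric with $\mathcal{B}\mathbf{x}^m>0$ for $\mathbf{x}\ne0$. $\phi_\tau(a,b)=\tau(a+b-\sqrt{a^2+b^2})+(1-\tau)a_+b_+$, $x_+=\max\{x,0\}$. $\partial_BG(\mathbf{z})$ is the set of limits of Jacobians $JG(\mathbf{z}^k)$ along sequences of differentiability points $\mathbf{z}^k\to\mathbf{z}$. $\nabla F_i(\mathbf{z})\in\mathbb{R}^{n+1}$ is the gradient of $F_i$ w.r.t. $\mathbf{z}=(\mathbf{x},t)$ and $\nabla_{\mathbf{x}}F_i(\mathbf{z})\in\mathbb{R}^n$ the gradient w.r.t. $\mathbf{x}$; $\mathbf{e}_i$ is the $i$th unit vector of $\mathbb{R}^n$, $\|\cdot\|$ the Euclidean norm, and $V_i$ the $i$th row of $V$. Procedure P (given $\tau\in(0,1]$ and $\mathbf{z}$): Let $S_1=\{i: x_i=0,F_i(\mathbf{z})=0\}$, $S_2=\{i:x_i=0,F_i(\mathbf{z})>0\}$, $S_3=\{i:x_i>0,F_i(\mathbf{z})=0\}$, $S_4=\{i:x_i>0,F_i(\mathbf{z})>0\}$. Let $\mathbf{c}\in\mathbb{R}^n$ with $c_i=1$ for $i\in S_1\cup S_2\cup S_3$ and $c_i=0$ otherwise. Writing $s_i=\nabla_{\mathbf{x}}F_i(\mathbf{z})^\top\mathbf{c}$: for $i\in S_1$: $V_i=\tau\big(1+\tfrac{c_i}{\|(c_i,s_i)\|}\big)(\mathbf{e}_i^\top,0)+\tau\big(1+\tfrac{s_i}{\|(c_i,s_i)\|}\big)\nabla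 F_i(\mathbf{z})^\top$; for $i\in S_3$: $V_i=(\tau+(1-\tau)x_i)\nabla F_i(\mathbf{z})^\top$ if $s_i<0$, and $V_i=\tau\nabla F_i(\mathbf{z})^\top$ otherwise; for $i\in S_4$: $V_i=\big[\tau\big(1-\tfrac{x_i}{\|(x_i,F_i(\mathbf{z}))\|}\big)+(1-\tau)F_i(\mathbf{z})\big](\mathbf{e}_i^\top,0)+\big[\tau\big(1-\tfrac{F_i(\mathbf{z})}{\|(x_i,F_i(\mathbf{z}))\|}\big)+(1-\tau)x_i\big]\nabla F_i(\mathbf{z})^\top$; for $i\notin S_1\cup S_3\cup S_4$: $V_i=\tau\big(1-\tfrac{x_i}{\|(x_i,F_i(\mathbf{z}))\|}\big)(\mathbf{e}_i^\top,0)+\tau\big(1-\tfrac{F_i(\mathbf{z})}{\|(x_i,F_i(\mathbf{z}))\|}\big)\nabla F_i(\mathbf{z})^\top$. *)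

From Stdlib Require Import Reals Lra List Permutation.
Open Scope R_scope.

(* Vectors in R^n are functions nat -> R; only indices < n are meaningful.
   A point z = (x,t) in R^{n+1}: x_i = z i (i < n), t = z n. *)

Fixpoint rsum (n : nat) (f : nat -> R) : R :=
  match n with O => 0 | S k => rsum k f + f k end.

Definition vnorm (q : nat) (v : nat -> R) : R := sqrt (rsum q (fun j => v j ^ 2)).

Fixpoint tsum (n k : nat) (f : list nat -> R) : R :=
  match k with
  | O => f nil
  | S k' => rsum n (fun j => tsum n k' (fun l => f (j :: l)))
  end.

Definition prodx (x : nat -> R) (l : list nat) : R :=
  fold_right (fun j acc => x j * acc) 1 l.

(* an order-m, dimension-n real tensor: entries A [i1; ...; im] *)
Definition tensor := list nat -> R.

Definition tapp (m n : nat) (A : tensor) (x : nat -> R) (i : nat) : R :=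
  tsum n (m - 1) (fun l => A (i :: l) * prodx x l).

Definition tform (m n : nat) (B : tensor) (x : nat -> R) : R :=
  tsum n m (fun l => B l * prodx x l).

Definition sym_tensor (m n : nat) (B : tensor) : Prop :=
  forall l l', length l = m -> Forall (fun j => (j < n)%nat) l ->
    Permutation l l' -> B l = B l'.

Definition posdef_tensor (m n : nat) (B : tensor) : Prop :=
  forall x : nat -> R, (exists j, (j < n)%nat /\ x j <> 0) -> 0 < tform m n B x.

Definition Fmap (m n : nat) (A B : tensor) (z : nat -> R) : nat -> R :=
  fun i => (z n) ^ 2 * tapp m n B z i - tapp m n A z i.

Definition posp (x : R) : R := Rmax x 0.

Definition phi (tau a b : R) : R :=
  tau * (a + b - sqrt (a ^ 2 + b ^ 2)) + (1 - tau) * posp a * posp b.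

Definition Hmap (m n : nat) (A B : tensor) (tau : R) (z : nat -> R) : nat -> R :=
  fun i => if (i <? n)%nat then phi tau (z i) (Fmap m n A B z i)
           else rsum n (fun j => z j ^ 2) - 1.

Definition jac_at (p q : nat) (f : (nat -> R) -> (nat -> R)) (z : nat -> R)
  (J : nat -> nat -> R) : Prop :=
  forall eps, 0 < eps -> exists delta, 0 < delta /\
    forall w : nat -> R, vnorm q (fun j => w j - z j) < delta ->
      vnorm p (fun i => f w i - f z i - rsum q (fun j => J i j * (w j - z j)))
        <= eps * vnorm q (fun j => w j - z j).

Definition in_B_subdiff (p q : nat) (f : (nat -> R) -> (nat -> R)) (z : nat -> R)
  (G : nat -> nat -> R) : Prop :=
  exists (zk : nat -> nat -> R) (Jk : nat -> nat -> nat -> R),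
    (forall k, jac_at p q f (zk k) (Jk k)) /\
    (forall j, (j < q)%nat -> Un_cv (fun k => zk k j) (z j)) /\
    (forall i j, (i < p)%nat -> (j < q)%nat -> Un_cv (fun k => Jk k i j) (G i j)).

Definition ecol (i j : nat) : R := if Nat.eqb i j then 1 else 0.

Definition norm2 (a b : R) : R := sqrt (a ^ 2 + b ^ 2).

(* Procedure P.  JF = Jacobian of F at z (row i = grad F_i(z)^T, column n = d/dt),
   Fz = F(z). *)
Definition cvec (n : nat) (z Fz : nat -> R) (i : nat) : R :=
  if Req_EM_T (z i) 0 then
    (if Req_EM_T (Fz i) 0 then 1 else if Rlt_dec 0 (Fz i) then 1 else 0)   (* S1, S2 *)
  else if Rlt_dec 0 (z i) then
    (if Req_EM_T (Fz i) 0 then 1 else 0)                                    (* S3 *)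
  else 0.

Definition svec (n : nat) (z Fz : nat -> R) (JF : nat -> nat -> R) (i : nat) : R :=
  rsum n (fun j => JF i j * cvec n z Fz j).

Definition procP (n : nat) (tau : R) (z Fz : nat -> R) (JF : nat -> nat -> R)
  (i j : nat) : R :=
  let xi := z i in let Fi := Fz i in
  let ci := cvec n z Fz i in let si := svec n z Fz JF i in
  let default := tau * (1 - xi / norm2 xi Fi) * ecol i j
                 + tau * (1 - Fi / norm2 xi Fi) * JF i j in
  if Req_EM_T xi 0 then
    (if Req_EM_T Fi 0 then   (* S1 *)
       tau * (1 + ci / norm2 ci si) * ecol i j + tau * (1 + si / norm2 ci si) * JF i j
     else default)
  else if Rlt_dec 0 xi then
    (if Req_EM_T Fi 0 then   (* S3 *)
       (if Rlt_dec si 0 then (tau + (1 - tau) * xi) * JF i j else tau * JF i j)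
     else if Rlt_dec 0 Fi then   (* S4 *)
       (tau * (1 - xi / norm2 xi Fi) + (1 - tau) * Fi) * ecol i j
       + (tau * (1 - Fi / norm2 xi Fi) + (1 - tau) * xi) * JF i j
     else default)
  else default.

Definition Gmat (n : nat) (V : nat -> nat -> R) (z : nat -> R) (i j : nat) : R :=
  if (i <? n)%nat then V i j else if (j <? n)%nat then 2 * z j else 0.

From Stdlib Require Import Reals Lra Lia List Permutation IndefiniteDescription Classical.
Open Scope R_scope.

(* Each F_i is a polynomial, so it has a slope Q_i with
   F_i(w) - F_i(v) = sum_j (w_j - v_j) Q_i(v,w)_j and Q_i continuous on the diagonal; hence F is
   differentiable everywhere with continuous Jacobian v |-> Q_i(v,v).  Along
   z^k = z - (c, 0)/(k+1) one gets F_i(z^k) = F_i(z) - s_i^k/(k+1) with s_i^k -> s_i.  In every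
   case of Procedure P the pair (x_i^k, F_i(z^k)) eventually stays in the open left half-plane,
   the open lower half-plane or the open positive quadrant, where phi_tau is smooth (for i in S_3
   the sign of s_i <> 0 decides which).  So H_tau is differentiable at z^k, and its Jacobians
   converge row by row to G; for i in S_1 the limit is set by the direction (1, s_i) along which
   (x_i^k, F_i(z^k)) approaches the origin. *)

Lemma rsum_ext n f g : (forall j, (j < n)%nat -> f j = g j) -> rsum n f = rsum n g.
Proof.
  induction n; simpl; intros H; [reflexivity|].
  rewrite IHn, H; [reflexivity | lia | intros; apply H; lia].
Qed.

Lemma rsum_plus n f g : rsum n (fun j => f j + g j) = rsum n f + rsum n g.
Proof. induction n; simpl; [lra | rewrite IHn; ring]. Qed.

Lemma rsum_minus n f g : rsum n (fun j => f j - g j) = rsum n f - rsum n g.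
Proof. induction n; simpl; [lra | rewrite IHn; ring]. Qed.

Lemma rsum_scal n c f : rsum n (fun j => c * f j) = c * rsum n f.
Proof. induction n; simpl; [ring | rewrite IHn; ring]. Qed.

Lemma rsum_const n c : rsum n (fun _ => c) = INR n * c.
Proof. induction n; simpl rsum; [simpl; ring | rewrite IHn, S_INR; ring]. Qed.

Lemma rsum_le n f g : (forall j, (j < n)%nat -> f j <= g j) -> rsum n f <= rsum n g.
Proof.
  induction n; simpl; intros H; [lra|].
  pose proof (H n (Nat.lt_succ_diag_r n)).
  assert (rsum n f <= rsum n g) by (apply IHn; intros; apply H; lia). lra.
Qed.

Lemma rsum_nonneg n f : (forall j, (j < n)%nat -> 0 <= f j) -> 0 <= rsum n f.
Proof. intros H. rewrite <- (Rmult_0_r (INR n)), <- rsum_const. apply rsum_le, H. Qed.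

Lemma rsum_abs n f : Rabs (rsum n f) <= rsum n (fun j => Rabs (f j)).
Proof.
  induction n; simpl; [rewrite Rabs_R0; lra|].
  eapply Rle_trans; [apply Rabs_triang | lra].
Qed.

Lemma rsum_ecol n k f : (k < n)%nat -> rsum n (fun j => f j * ecol k j) = f k.
Proof.
  induction n as [|n IHn]; intros Hk; [lia|]. simpl. unfold ecol at 2.
  destruct (Nat.eqb_spec k n) as [->|Hne].
  - rewrite (rsum_ext n _ (fun _ => 0)), rsum_const; [ring|].
    intros j Hj. unfold ecol. destruct (Nat.eqb_spec n j); [lia | ring].
  - rewrite IHn by lia. ring.
Qed.

Lemma rsum_indicator n q f : (n <= q)%nat ->
  rsum q (fun j => if (j <? n)%nat then f j else 0) = rsum n f.
Proof.
  induction q as [|q IHq]; intros Hnq; simpl.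
  - replace n with 0%nat by lia. reflexivity.
  - destruct (Nat.eq_dec n (S q)) as [->|Hne].
    + rewrite (rsum_ext q _ f); [destruct (Nat.ltb_spec q (S q)); [reflexivity | lia]|].
      intros j Hj. destruct (Nat.ltb_spec j (S q)); [reflexivity | lia].
    + rewrite IHq by lia. destruct (Nat.ltb_spec q n); [lia | ring].
Qed.

Lemma vnorm_ext q u v : (forall j, (j < q)%nat -> u j = v j) -> vnorm q u = vnorm q v.
Proof. intros H. unfold vnorm. f_equal. apply rsum_ext. intros j Hj. now rewrite H. Qed.

Lemma vnorm_zero q : vnorm q (fun _ => 0) = 0.
Proof.
  unfold vnorm. rewrite (rsum_ext q _ (fun _ => 0)), rsum_const, Rmult_0_r; [apply sqrt_0|].
  intros; ring.
Qed.

Lemma Rabs_le_vnorm q v j : (j < q)%nat -> Rabs (v j) <= vnorm q v.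
Proof.
  intros Hj. unfold vnorm. rewrite <- sqrt_Rsqr_abs, Rsqr_pow2. apply sqrt_le_1_alt.
  induction q as [|q IHq]; [lia|]. cbn [rsum].
  assert (0 <= rsum q (fun j => v j ^ 2)).
  { apply rsum_nonneg. intros; apply pow2_ge_0. }
  pose proof (pow2_ge_0 (v q)).
  destruct (Nat.eq_dec j q) as [->|]; [lra|].
  assert (v j ^ 2 <= rsum q (fun j => v j ^ 2)) by (apply IHq; lia). lra.
Qed.

Lemma vnorm_le_rsum_abs q v : vnorm q v <= rsum q (fun j => Rabs (v j)).
Proof.
  assert (Hnn : forall p, 0 <= rsum p (fun j => Rabs (v j))).
  { intros p. apply rsum_nonneg. intros; apply Rabs_pos. }
  unfold vnorm. rewrite <- (sqrt_pow2 _ (Hnn q)). apply sqrt_le_1_alt.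
  induction q as [|q IHq]; cbn [rsum]; [lra|].
  pose proof (Hnn q). pose proof (Rabs_pos (v q)).
  assert (v q ^ 2 = Rabs (v q) ^ 2) by (rewrite <- !Rsqr_pow2; apply Rsqr_abs). nra.
Qed.

Lemma vnorm_ecol q j s : (j < q)%nat -> vnorm q (fun l => s * ecol j l) = Rabs s.
Proof.
  intros Hj. unfold vnorm.
  rewrite (rsum_ext q _ (fun l => s ^ 2 * ecol j l)).
  - rewrite rsum_ecol, <- Rsqr_pow2 by assumption. apply sqrt_Rsqr_abs.
  - intros l _. unfold ecol. destruct (j =? l)%nat; ring.
Qed.

Definition vec_cv (q : nat) (wk : nat -> nat -> R) (v : nat -> R) : Prop :=
  forall j, (j < q)%nat -> Un_cv (fun k => wk k j) (v j).

Definition eventually (P : nat -> Prop) : Prop := exists K, forall k, (K <= k)%nat -> P k.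

Lemma Un_cv_const c : Un_cv (fun _ => c) c.
Proof. intros eps Heps. exists 0%nat. intros k _. unfold Rdist. rewrite Rminus_diag, Rabs_R0. lra. Qed.

Lemma Un_cv_limit_eq u l l' : Un_cv u l -> l = l' -> Un_cv u l'.
Proof. intros Hu <-. exact Hu. Qed.

Lemma Un_cv_inv u l : Un_cv u l -> l <> 0 -> Un_cv (fun k => / u k) (/ l).
Proof.
  intros Hu Hl. apply (continuity_seq (fun x => / x)); [|exact Hu].
  apply (continuity_pt_inv (fun x => x)); [apply derivable_continuous_pt, derivable_pt_id | exact Hl].
Qed.

Lemma Un_cv_sqrt u l : Un_cv u l -> 0 <= l -> Un_cv (fun k => sqrt (u k)) (sqrt l).
Proof. intros Hu Hl. exact (continuity_seq _ _ _ (continuity_pt_sqrt _ Hl) Hu). Qed.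

Lemma Un_cv_rsum n (u : nat -> nat -> R) l :
  (forall j, (j < n)%nat -> Un_cv (fun k => u k j) (l j)) -> Un_cv (fun k => rsum n (u k)) (rsum n l).
Proof.
  induction n; intros H; simpl; [apply Un_cv_const|].
  apply CV_plus; [apply IHn; intros; apply H; lia | apply H; lia].
Qed.

Lemma Un_cv_eventually_eq u v l : eventually (fun k => u k = v k) -> Un_cv v l -> Un_cv u l.
Proof.
  intros [K HK] Hv eps Heps. destruct (Hv eps Heps) as [N HN].
  exists (Nat.max N K). intros k Hk. rewrite HK by lia. apply HN. lia.
Qed.

Lemma eventually_pos u l : Un_cv u l -> 0 < l -> eventually (fun k => 0 < u k).
Proof.
  intros Hu Hl. destruct (Hu l Hl) as [N HN]. exists N. intros k Hk.
  specialize (HN k Hk). unfold Rdist in HN. apply Rabs_def2 in HN. lra.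
Qed.

Lemma eventually_neg u l : Un_cv u l -> l < 0 -> eventually (fun k => u k < 0).
Proof.
  intros Hu Hl. destruct (Hu (- l) ltac:(lra)) as [N HN]. exists N. intros k Hk.
  specialize (HN k Hk). unfold Rdist in HN. apply Rabs_def2 in HN. lra.
Qed.

Lemma eventually_of_forall (P : nat -> Prop) : (forall k, P k) -> eventually P.
Proof. intros H. exists 0%nat. intros k _. apply H. Qed.

Lemma eventually_mono (P P' : nat -> Prop) :
  (forall k, P k -> P' k) -> eventually P -> eventually P'.
Proof. intros H [K HK]. exists K. intros k Hk. apply H, HK, Hk. Qed.

Lemma eventually_and (P P' : nat -> Prop) :
  eventually P -> eventually P' -> eventually (fun k => P k /\ P' k).
Proof.
  intros [K HK] [K' HK']. exists (Nat.max K K'). intros k Hk. split; [apply HK | apply HK']; lia.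
Qed.

Lemma eventually_forall_lt p (P : nat -> nat -> Prop) :
  (forall i, (i < p)%nat -> eventually (P i)) ->
  eventually (fun k => forall i, (i < p)%nat -> P i k).
Proof.
  induction p as [|p IHp]; intros H.
  - exists 0%nat. intros; lia.
  - destruct (eventually_and _ _ (IHp (fun i Hi => H i (Nat.lt_lt_succ_r _ _ Hi)))
      (H p (Nat.lt_succ_diag_r p))) as [K HK].
    exists K. intros k Hk i Hi. destruct (Nat.eq_dec i p) as [->|]; apply HK; auto; lia.
Qed.

Lemma continuity_eps_delta_of_seq q (g : (nat -> R) -> R) v0 :
  (forall wk, vec_cv q wk v0 -> Un_cv (fun k => g (wk k)) (g v0)) ->
  forall eps, 0 < eps -> exists delta, 0 < delta /\
    forall w, vnorm q (fun j => w j - v0 j) < delta -> Rabs (g w - g v0) < eps.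
Proof.
  intros Hg eps Heps. apply NNPP. intros Hno.
  assert (Hbad : forall k, exists w,
    vnorm q (fun j => w j - v0 j) < RinvN k /\ eps <= Rabs (g w - g v0)).
  { intros k. apply NNPP. intros Hk. apply Hno. exists (RinvN k). split; [apply cond_pos|].
    intros w Hw. apply Rnot_le_lt. intros Hle. apply Hk. exists w. auto. }
  destruct (functional_choice _ Hbad) as [wk Hwk].
  assert (Hcv : vec_cv q wk v0).
  { intros j Hj e He. destruct (RinvN_cv He) as [N HN]. exists N. intros k Hk.
    specialize (HN k Hk). destruct (Hwk k) as [Hk' _].
    pose proof (Rabs_le_vnorm q (fun j => wk k j - v0 j) j Hj).
    unfold Rdist in *. rewrite Rminus_0_r, Rabs_pos_eq in HN by (left; apply cond_pos). lra. }
  destruct (Hg wk Hcv eps Heps) as [N HN]. specialize (HN N (le_n N)). destruct (Hwk N).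
  unfold Rdist in HN. lra.
Qed.

(** * Slopes and gradients *)

(* Carathéodory slopes based at the points of S and continuous on the diagonal over S:
   for S = [fun v => v = v0] this is differentiability at v0, for S = everything it is
   continuous differentiability. *)
Definition slope_on (S : (nat -> R) -> Prop) (q : nat) (f : (nat -> R) -> R)
  (Q : (nat -> R) -> (nat -> R) -> nat -> R) : Prop :=
  (forall v w, S v -> f w - f v = rsum q (fun j => (w j - v j) * Q v w j)) /\
  (forall v0 vk wk, S v0 -> (forall k, S (vk k)) -> vec_cv q vk v0 -> vec_cv q wk v0 ->
     forall j, (j < q)%nat -> Un_cv (fun k => Q (vk k) (wk k) j) (Q v0 v0 j)).

Definition has_slope_on S q f : Prop := exists Q, slope_on S q f Q.

Section Slopes.

Variables (S : (nat -> R) -> Prop) (q : nat).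

Lemma slope_on_sub (S' : (nat -> R) -> Prop) f Q :
  (forall v, S' v -> S v) -> slope_on S q f Q -> slope_on S' q f Q.
Proof.
  intros HS [Hid Hcv]. split.
  - intros v w Hv. apply Hid, HS, Hv.
  - intros v0 vk wk Hv0 Hvk. apply Hcv; auto.
Qed.

Lemma slope_on_ext f g Q : (forall w, f w = g w) -> slope_on S q g Q -> slope_on S q f Q.
Proof.
  intros Hfg [Hid Hcv]. split; [|exact Hcv].
  intros v w Hv. rewrite !Hfg. apply Hid, Hv.
Qed.

Lemma slope_on_cv f Q v0 wk :
  slope_on S q f Q -> S v0 -> vec_cv q wk v0 -> Un_cv (fun k => f (wk k)) (f v0).
Proof.
  intros [Hid Hcv] Hv0 Hwk.
  assert (Hlim : Un_cv (fun k => f v0 + rsum q (fun j => (wk k j - v0 j) * Q v0 (wk k) j))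
                       (f v0 + rsum q (fun j => (v0 j - v0 j) * Q v0 v0 j))).
  { apply CV_plus; [apply Un_cv_const|]. apply Un_cv_rsum. intros j Hj.
    apply CV_mult; [apply CV_minus; [apply Hwk, Hj | apply Un_cv_const]|].
    apply (Hcv v0 (fun _ => v0)); auto. intros l _. apply Un_cv_const. }
  rewrite (rsum_ext q _ (fun _ => 0)), rsum_const, Rmult_0_r, Rplus_0_r in Hlim by (intros; ring).
  eapply Un_cv_ext; [|exact Hlim]. intros k. cbv beta. rewrite <- Hid by exact Hv0. ring.
Qed.

Lemma slope_on_const c : slope_on S q (fun _ => c) (fun _ _ _ => 0).
Proof.
  split.
  - intros v w _. rewrite (rsum_ext q _ (fun _ => 0)), rsum_const; intros; ring.
  - intros. apply Un_cv_const.
Qed.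

Lemma slope_on_coord i : (i < q)%nat -> slope_on S q (fun w => w i) (fun _ _ => ecol i).
Proof.
  intros Hi. split.
  - intros v w _. symmetry. apply rsum_ecol, Hi.
  - intros. apply Un_cv_const.
Qed.

Lemma slope_on_plus f g Qf Qg : slope_on S q f Qf -> slope_on S q g Qg ->
  slope_on S q (fun w => f w + g w) (fun v w j => Qf v w j + Qg v w j).
Proof.
  intros [Hf Cf] [Hg Cg]. split.
  - intros v w Hv. rewrite (rsum_ext q _ (fun j => (w j - v j) * Qf v w j + (w j - v j) * Qg v w j))
      by (intros; ring).
    rewrite rsum_plus, <- Hf, <- Hg by exact Hv. ring.
  - intros. apply CV_plus; [apply Cf | apply Cg]; auto.
Qed.

Lemma slope_on_mult f g Qf Qg : slope_on S q f Qf -> slope_on S q g Qg ->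
  slope_on S q (fun w => f w * g w) (fun v w j => f w * Qg v w j + g v * Qf v w j).
Proof.
  intros Hfs Hgs. pose proof Hfs as [Hf Cf]. pose proof Hgs as [Hg Cg]. split.
  - intros v w Hv.
    rewrite (rsum_ext q _ (fun j => f w * ((w j - v j) * Qg v w j) + g v * ((w j - v j) * Qf v w j)))
      by (intros; ring).
    rewrite rsum_plus, !rsum_scal, <- Hf, <- Hg by exact Hv. ring.
  - intros v0 vk wk Hv0 Hvk Hvcv Hwcv j Hj.
    apply CV_plus; apply CV_mult; auto.
    + exact (slope_on_cv f Qf v0 wk Hfs Hv0 Hwcv).
    + exact (slope_on_cv g Qg v0 vk Hgs Hv0 Hvcv).
Qed.

Lemma slope_on_sqrt g Qg : (forall w, 0 <= g w) -> (forall v, S v -> 0 < g v) -> slope_on S q g Qg ->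
  slope_on S q (fun w => sqrt (g w)) (fun v w j => Qg v w j * / (sqrt (g v) + sqrt (g w))).
Proof.
  intros Hnn Hpos Hgs. pose proof Hgs as [Hg Cg].
  assert (Hden : forall v w, S v -> 0 < sqrt (g v) + sqrt (g w)).
  { intros v w Hv. pose proof (sqrt_lt_R0 _ (Hpos v Hv)). pose proof (sqrt_pos (g w)). lra. }
  split.
  - intros v w Hv. specialize (Hden v w Hv).
    rewrite (rsum_ext q _ (fun j => / (sqrt (g v) + sqrt (g w)) * ((w j - v j) * Qg v w j)))
      by (intros; ring).
    rewrite rsum_scal, <- Hg by exact Hv.
    assert (E : g w - g v = (sqrt (g w) - sqrt (g v)) * (sqrt (g v) + sqrt (g w))).
    { rewrite <- (sqrt_sqrt (g w)) at 1 by apply Hnn.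
      rewrite <- (sqrt_sqrt (g v)) at 1 by apply Hnn. ring. }
    rewrite E. field. lra.
  - intros v0 vk wk Hv0 Hvk Hvcv Hwcv j Hj.
    apply CV_mult; [apply Cg; auto|]. apply Un_cv_inv; [|specialize (Hden v0 v0 Hv0); lra].
    apply CV_plus; apply Un_cv_sqrt; try apply Hnn;
      [exact (slope_on_cv g Qg v0 vk Hgs Hv0 Hvcv) | exact (slope_on_cv g Qg v0 wk Hgs Hv0 Hwcv)].
Qed.

Lemma slope_on_sumsq n : (n <= q)%nat ->
  slope_on S q (fun w => rsum n (fun j => w j ^ 2)) (fun v w j => if (j <? n)%nat then v j + w j else 0).
Proof.
  intros Hnq. split.
  - intros v w _.
    rewrite (rsum_ext q _ (fun j => if (j <? n)%nat then w j ^ 2 - v j ^ 2 else 0)).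
    + rewrite rsum_indicator, rsum_minus by assumption. reflexivity.
    + intros j _. destruct (j <? n)%nat; ring.
  - intros v0 vk wk Hv0 Hvk Hvcv Hwcv j Hj. destruct (j <? n)%nat; [|apply Un_cv_const].
    apply CV_plus; auto.
Qed.

Lemma has_slope_on_rsum N (h : nat -> (nat -> R) -> R) :
  (forall j, (j < N)%nat -> has_slope_on S q (h j)) -> has_slope_on S q (fun w => rsum N (fun j => h j w)).
Proof.
  induction N as [|N IHN]; intros H; simpl.
  - eexists. apply slope_on_const.
  - destruct IHN as [Q1 H1]; [intros; apply H; lia|]. destruct (H N) as [Q2 H2]; [lia|].
    eexists. apply slope_on_plus; eassumption.
Qed.

Lemma has_slope_on_tsum n k (h : list nat -> (nat -> R) -> R) :
  (forall l, Forall (fun j => (j < n)%nat) l -> has_slope_on S q (h l)) ->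
  has_slope_on S q (fun w => tsum n k (fun l => h l w)).
Proof.
  revert h; induction k as [|k IHk]; intros h H; simpl; [apply H; constructor|].
  apply (has_slope_on_rsum n (fun j w => tsum n k (fun l => h (j :: l) w))). intros j Hj.
  apply (IHk (fun l => h (j :: l))). intros l Hl. apply H. constructor; assumption.
Qed.

Lemma has_slope_on_prodx l : Forall (fun j => (j < q)%nat) l -> has_slope_on S q (fun w => prodx w l).
Proof.
  induction l as [|i l IHl]; intros Hl; simpl.
  - eexists. apply slope_on_const.
  - inversion Hl as [|? ? Hi Hl']. destruct (IHl Hl') as [Q HQ].
    eexists. apply (slope_on_mult (fun w => w i)); [apply slope_on_coord, Hi | exact HQ].
Qed.

End Slopes.

Definition grad_at (q : nat) (f : (nat -> R) -> R) (v0 : nat -> R) (D : nat -> R) : Prop :=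
  forall eps, 0 < eps -> exists delta, 0 < delta /\
    forall w, vnorm q (fun j => w j - v0 j) < delta ->
      Rabs (f w - f v0 - rsum q (fun j => D j * (w j - v0 j))) <= eps * vnorm q (fun j => w j - v0 j).

Lemma slope_on_near S q f Q v0 : slope_on S q f Q -> S v0 ->
  forall eps, 0 < eps -> exists delta, 0 < delta /\
    forall w, vnorm q (fun j => w j - v0 j) < delta -> Rabs (f w - f v0) < eps.
Proof.
  intros Hf Hv0. apply continuity_eps_delta_of_seq.
  intros wk Hwk. exact (slope_on_cv S q f Q v0 wk Hf Hv0 Hwk).
Qed.

Lemma slope_on_grad_at S q f Q v0 : slope_on S q f Q -> S v0 -> grad_at q f v0 (Q v0 v0).
Proof.
  intros Hfs Hv0 eps Heps. pose proof Hfs as [Hf Cf].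
  set (osc := fun w => rsum q (fun j => Rabs (Q v0 w j - Q v0 v0 j))).
  destruct (continuity_eps_delta_of_seq q osc v0) with eps as [delta [Hdelta Hosc]]; [|exact Heps|].
  { intros wk Hwk. apply Un_cv_rsum. intros j Hj. apply cv_cvabs, CV_minus; [|apply Un_cv_const].
    apply (Cf v0 (fun _ => v0)); auto. intros l _. apply Un_cv_const. }
  exists delta. split; [exact Hdelta|]. intros w Hw. specialize (Hosc w Hw).
  assert (Hosc0 : osc v0 = 0).
  { unfold osc. rewrite (rsum_ext q _ (fun _ => 0)), rsum_const; [ring|].
    intros. rewrite Rminus_diag. apply Rabs_R0. }
  assert (Hosc_nn : 0 <= osc w).
  { apply rsum_nonneg. intros; apply Rabs_pos. }
  rewrite Hosc0, Rminus_0_r, Rabs_pos_eq in Hosc by exact Hosc_nn.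
  set (d := vnorm q (fun j => w j - v0 j)).
  rewrite Hf, <- rsum_minus by exact Hv0.
  rewrite (rsum_ext q _ (fun j => (w j - v0 j) * (Q v0 w j - Q v0 v0 j))) by (intros; ring).
  apply Rle_trans with (rsum q (fun j => d * Rabs (Q v0 w j - Q v0 v0 j))).
  - eapply Rle_trans; [apply rsum_abs | apply rsum_le]. intros j Hj. rewrite Rabs_mult.
    apply Rmult_le_compat_r; [apply Rabs_pos | apply (Rabs_le_vnorm q (fun j => w j - v0 j) j Hj)].
  - rewrite rsum_scal. fold (osc w). assert (0 <= d) by apply sqrt_pos. nra.
Qed.

Lemma grad_at_local q f g v0 D : grad_at q g v0 D ->
  (exists r, 0 < r /\ forall w, vnorm q (fun j => w j - v0 j) < r -> f w = g w) -> grad_at q f v0 D.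
Proof.
  intros Hg [r [Hr Hfg]] eps Heps. destruct (Hg eps Heps) as [delta [Hdelta Hd]].
  exists (Rmin delta r). split; [apply Rmin_pos; assumption|]. intros w Hw.
  pose proof (Rmin_l delta r). pose proof (Rmin_r delta r).
  assert (Hv0 : vnorm q (fun j => v0 j - v0 j) < r).
  { rewrite (vnorm_ext q _ (fun _ => 0)), vnorm_zero by (intros; ring). exact Hr. }
  rewrite (Hfg v0 Hv0), (Hfg w) by lra. apply Hd. lra.
Qed.

Lemma grad_at_ext q f v0 D D' :
  (forall j, (j < q)%nat -> D j = D' j) -> grad_at q f v0 D -> grad_at q f v0 D'.
Proof.
  intros HD Hf eps Heps. destruct (Hf eps Heps) as [delta [Hdelta Hd]].
  exists delta. split; [exact Hdelta|]. intros w Hw.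
  rewrite <- (rsum_ext q (fun j => D j * (w j - v0 j)))
    by (intros j Hj; rewrite HD by exact Hj; reflexivity).
  apply Hd, Hw.
Qed.

Lemma grad_at_unique q f v0 D D' j :
  grad_at q f v0 D -> grad_at q f v0 D' -> (j < q)%nat -> D j = D' j.
Proof.
  intros HD HD' Hj. destruct (Req_dec (D j) (D' j)) as [|Hne]; [assumption|]. exfalso.
  set (eps := Rabs (D j - D' j) / 4).
  assert (Hgap : 0 < Rabs (D j - D' j)) by (apply Rabs_pos_lt; lra).
  destruct (HD eps) as [d [Hd Hdd]]; [unfold eps; lra|].
  destruct (HD' eps) as [d' [Hd' Hdd']]; [unfold eps; lra|].
  set (s := Rmin d d' / 2). pose proof (Rmin_l d d'). pose proof (Rmin_r d d').
  assert (Hs : 0 < s) by (unfold s; pose proof (Rmin_pos d d' Hd Hd'); lra).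
  set (w := fun l => v0 l + s * ecol j l).
  assert (Hw : vnorm q (fun l => w l - v0 l) = s).
  { rewrite (vnorm_ext q _ (fun l => s * ecol j l)), vnorm_ecol by (assumption || (intros; unfold w; ring)).
    apply Rabs_pos_eq. lra. }
  assert (Hlin : forall D, rsum q (fun l => D l * (w l - v0 l)) = D j * s).
  { intros D0. rewrite (rsum_ext q _ (fun l => (D0 l * s) * ecol j l)) by (intros; unfold w; ring).
    apply rsum_ecol, Hj. }
  specialize (Hdd w). specialize (Hdd' w). rewrite Hw, Hlin in Hdd, Hdd'.
  specialize (Hdd ltac:(unfold s; lra)). specialize (Hdd' ltac:(unfold s; lra)).
  assert (Hgap_s : Rabs ((D j - D' j) * s) <= 2 * eps * s).
  { replace ((D j - D' j) * s) with (- (f w - f v0 - D j * s) + (f w - f v0 - D' j * s)) by ring.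
    eapply Rle_trans; [apply Rabs_triang|]. rewrite Rabs_Ropp. lra. }
  rewrite Rabs_mult, (Rabs_pos_eq s) in Hgap_s by lra. unfold eps in Hgap_s. nra.
Qed.

Lemma jac_at_row p q f v0 J i :
  jac_at p q f v0 J -> (i < p)%nat -> grad_at q (fun w => f w i) v0 (J i).
Proof.
  intros HJ Hi eps Heps. destruct (HJ eps Heps) as [delta [Hdelta Hd]].
  exists delta. split; [exact Hdelta|]. intros w Hw.
  eapply Rle_trans; [|apply Hd, Hw].
  exact (Rabs_le_vnorm p (fun i => f w i - f v0 i - rsum q (fun j => J i j * (w j - v0 j))) i Hi).
Qed.

Lemma exists_delta_forall_lt p (P : nat -> R -> Prop) :
  (forall i d d', 0 < d' <= d -> P i d -> P i d') ->
  (forall i, (i < p)%nat -> exists d, 0 < d /\ P i d) ->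
  exists d, 0 < d /\ forall i, (i < p)%nat -> P i d.
Proof.
  intros Hmono. induction p as [|p IHp]; intros H.
  - exists 1. split; [lra | intros; lia].
  - destruct IHp as [d1 [Hd1 H1]]; [intros; apply H; lia|].
    destruct (H p) as [d2 [Hd2 H2]]; [lia|].
    exists (Rmin d1 d2). pose proof (Rmin_l d1 d2). pose proof (Rmin_r d1 d2).
    pose proof (Rmin_pos d1 d2 Hd1 Hd2). split; [assumption|]. intros i Hi.
    destruct (Nat.eq_dec i p) as [->|]; [apply Hmono with d2 | apply Hmono with d1]; try lra; auto.
    apply H1. lia.
Qed.

Lemma jac_at_of_rows p q f v0 J : (forall i, (i < p)%nat -> grad_at q (fun w => f w i) v0 (J i)) ->
  jac_at p q f v0 J.
Proof.
  intros HJ eps Heps.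
  set (eps' := eps / (INR p + 1)).
  assert (Hp : 0 < INR p + 1) by (pose proof (pos_INR p); lra).
  assert (Heps' : 0 < eps') by (unfold eps'; apply Rdiv_lt_0_compat; assumption).
  destruct (exists_delta_forall_lt p (fun i delta => forall w, vnorm q (fun j => w j - v0 j) < delta ->
    Rabs (f w i - f v0 i - rsum q (fun j => J i j * (w j - v0 j))) <= eps' * vnorm q (fun j => w j - v0 j)))
    as [delta [Hdelta Hd]].
  { intros i d d' Hd' Hi w Hw. apply Hi. lra. }
  { intros i Hi. exact (HJ i Hi eps' Heps'). }
  exists delta. split; [exact Hdelta|]. intros w Hw.
  set (d := vnorm q (fun j => w j - v0 j)).
  eapply Rle_trans; [apply vnorm_le_rsum_abs|].
  eapply Rle_trans; [apply (rsum_le p _ (fun _ => eps' * d)); intros i Hi; apply Hd; assumption|].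
  rewrite rsum_const. unfold eps'.
  assert (0 <= d) by apply sqrt_pos.
  apply Rmult_le_reg_r with (INR p + 1); [exact Hp|].
  replace (INR p * (eps / (INR p + 1) * d) * (INR p + 1)) with (INR p * (eps * d)) by (field; lra).
  pose proof (pos_INR p). nra.
Qed.

(** * Smoothness of phi off its kinks *)

(* The complement is the boundary of the closed positive quadrant, which carries the kinks of
   [posp a * posp b] and the singularity of [sqrt (a^2 + b^2)]. *)
Definition kink_free (a b : R) : Prop := a < 0 \/ b < 0 \/ (0 < a /\ 0 < b).

Definition step (a : R) : R := if Rlt_dec 0 a then 1 else 0.

Definition dphi_a (tau a b : R) : R := tau * (1 - a / norm2 a b) + (1 - tau) * step a * posp b.

Definition dphi_b (tau a b : R) : R := tau * (1 - b / norm2 a b) + (1 - tau) * posp a * step b.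

Lemma posp_nonpos a : a <= 0 -> posp a = 0.
Proof. intros Ha. unfold posp. apply Rmax_right, Ha. Qed.

Lemma posp_pos a : 0 < a -> posp a = a.
Proof. intros Ha. unfold posp. apply Rmax_left. lra. Qed.

Lemma step_nonpos a : a <= 0 -> step a = 0.
Proof. intros Ha. unfold step. destruct (Rlt_dec 0 a); [lra | reflexivity]. Qed.

Lemma step_pos a : 0 < a -> step a = 1.
Proof. intros Ha. unfold step. destruct (Rlt_dec 0 a); [reflexivity | lra]. Qed.

Lemma step_mul_self a : step a * a = posp a.
Proof.
  destruct (Rle_lt_dec a 0) as [Ha|Ha].
  - rewrite step_nonpos, posp_nonpos by exact Ha. ring.
  - rewrite step_pos, posp_pos by exact Ha. ring.
Qed.

Lemma kink_free_norm2_pos a b : kink_free a b -> 0 < a * a + b * b.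
Proof. intros [Ha|[Hb|[Ha Hb]]]; nra. Qed.

Lemma posp_mul_near a0 b0 : kink_free a0 b0 -> exists r, 0 < r /\ forall a b,
  Rabs (a - a0) < r -> Rabs (b - b0) < r -> posp a * posp b = (step a0 * a) * (step b0 * b).
Proof.
  intros [Ha0|[Hb0|[Ha0 Hb0]]].
  - exists (- a0). split; [lra|]. intros a b Ha _. apply Rabs_def2 in Ha.
    rewrite posp_nonpos, step_nonpos by lra. ring.
  - exists (- b0). split; [lra|]. intros a b _ Hb. apply Rabs_def2 in Hb.
    rewrite (posp_nonpos b), (step_nonpos b0) by lra. ring.
  - exists (Rmin a0 b0). split; [apply Rmin_pos; assumption|]. intros a b Ha Hb.
    pose proof (Rmin_l a0 b0). pose proof (Rmin_r a0 b0). apply Rabs_def2 in Ha, Hb.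
    rewrite posp_pos, (posp_pos b), step_pos, (step_pos b0) by lra. ring.
Qed.

Lemma phi_grad_at S q tau fa fb Qa Qb v0 :
  slope_on S q fa Qa -> slope_on S q fb Qb -> S v0 -> kink_free (fa v0) (fb v0) ->
  grad_at q (fun w => phi tau (fa w) (fb w)) v0
    (fun j => dphi_a tau (fa v0) (fb v0) * Qa v0 v0 j + dphi_b tau (fa v0) (fb v0) * Qb v0 v0 j).
Proof.
  intros Ha Hb Hv0 Hkink.
  set (S0 := fun v => v = v0).
  assert (Ha0 : slope_on S0 q fa Qa) by (apply (slope_on_sub S); [intros v ->|]; assumption).
  assert (Hb0 : slope_on S0 q fb Qb) by (apply (slope_on_sub S); [intros v ->|]; assumption).
  assert (Hg0 : 0 < fa v0 * fa v0 + fb v0 * fb v0) by (apply kink_free_norm2_pos, Hkink).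
  set (sa := step (fa v0)). set (sb := step (fb v0)).
  set (smooth := fun w => tau * (fa w + fb w) + - tau * sqrt (fa w * fa w + fb w * fb w)
                          + (1 - tau) * ((sa * fa w) * (sb * fb w))).
  eassert (Hsmooth : slope_on S0 q smooth _).
  { unfold smooth. apply slope_on_plus; [apply slope_on_plus|].
    - apply (slope_on_mult S0 q (fun _ => tau)); [apply slope_on_const|].
      apply slope_on_plus; [exact Ha0 | exact Hb0].
    - apply (slope_on_mult S0 q (fun _ => - tau)); [apply slope_on_const|].
      apply slope_on_sqrt; [intros; nra | intros v ->; exact Hg0|].
      apply slope_on_plus; apply slope_on_mult; eassumption.
    - apply (slope_on_mult S0 q (fun _ => 1 - tau)); [apply slope_on_const|].
      apply slope_on_mult; apply (slope_on_mult S0 q (fun _ => _)); (apply slope_on_const || eassumption). }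
  apply grad_at_local with smooth.
  - eapply grad_at_ext; [|exact (slope_on_grad_at S0 q smooth _ v0 Hsmooth eq_refl)].
    intros j _. cbv beta. unfold dphi_a, dphi_b, norm2.
    replace (fa v0 ^ 2 + fb v0 ^ 2) with (fa v0 * fa v0 + fb v0 * fb v0) by ring.
    rewrite <- (step_mul_self (fa v0)), <- (step_mul_self (fb v0)). fold sa sb.
    pose proof (sqrt_lt_R0 _ Hg0). field. lra.
  - destruct (posp_mul_near _ _ Hkink) as [r [Hr Hnear]].
    destruct (slope_on_near S0 q fa Qa v0 Ha0 eq_refl r Hr) as [da [Hda Hna]].
    destruct (slope_on_near S0 q fb Qb v0 Hb0 eq_refl r Hr) as [db [Hdb Hnb]].
    exists (Rmin da db). split; [apply Rmin_pos; assumption|]. intros w Hw.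
    pose proof (Rmin_l da db). pose proof (Rmin_r da db).
    unfold phi, smooth.
    replace ((1 - tau) * posp (fa w) * posp (fb w)) with ((1 - tau) * (posp (fa w) * posp (fb w))) by ring.
    rewrite Hnear by (apply Hna || apply Hnb; lra).
    replace (fa w ^ 2 + fb w ^ 2) with (fa w * fa w + fb w * fb w) by ring. fold sa sb. ring.
Qed.

(** * Limits of the partial derivatives of phi *)

Lemma norm2_pos a b : a <> 0 \/ b <> 0 -> 0 < norm2 a b.
Proof. intros Hab. unfold norm2. apply sqrt_lt_R0. destruct Hab; nra. Qed.

Lemma Un_cv_norm2 (a b : nat -> R) x y : Un_cv a x -> Un_cv b y ->
  Un_cv (fun k => norm2 (a k) (b k)) (norm2 x y).
Proof.
  intros Ha Hb. unfold norm2. apply Un_cv_sqrt; [|nra].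
  apply (Un_cv_ext (fun k => a k * a k + b k * b k)); [intros; ring|].
  replace (x ^ 2 + y ^ 2) with (x * x + y * y) by ring.
  apply CV_plus; apply CV_mult; assumption.
Qed.

Lemma Un_cv_div_norm2 (u a b : nat -> R) l x y : Un_cv u l -> Un_cv a x -> Un_cv b y ->
  x <> 0 \/ y <> 0 -> Un_cv (fun k => u k / norm2 (a k) (b k)) (l / norm2 x y).
Proof.
  intros Hu Ha Hb Hxy. apply CV_mult; [exact Hu|].
  apply Un_cv_inv; [apply Un_cv_norm2; assumption|]. pose proof (norm2_pos x y Hxy). lra.
Qed.

Lemma dphi_cv_off_quadrant tau (a b : nat -> R) x y :
  Un_cv a x -> Un_cv b y -> x <> 0 \/ y <> 0 -> eventually (fun k => a k < 0 \/ b k < 0) ->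
  eventually (fun k => kink_free (a k) (b k)) /\
  Un_cv (fun k => dphi_a tau (a k) (b k)) (tau * (1 - x / norm2 x y)) /\
  Un_cv (fun k => dphi_b tau (a k) (b k)) (tau * (1 - y / norm2 x y)).
Proof.
  intros Ha Hb Hxy Hev. split; [|split].
  - refine (eventually_mono _ _ _ Hev). unfold kink_free. tauto.
  - apply Un_cv_eventually_eq with (fun k => tau * (1 - a k / norm2 (a k) (b k))).
    + refine (eventually_mono _ _ _ Hev). intros k Hk. unfold dphi_a.
      destruct Hk; [rewrite step_nonpos | rewrite (posp_nonpos (b k))]; lra.
    + apply CV_mult; [apply Un_cv_const|].
      apply CV_minus; [apply Un_cv_const | apply Un_cv_div_norm2; assumption].
  - apply Un_cv_eventually_eq with (fun k => tau * (1 - b k / norm2 (a k) (b k))).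
    + refine (eventually_mono _ _ _ Hev). intros k Hk. unfold dphi_b.
      destruct Hk; [rewrite posp_nonpos | rewrite (step_nonpos (b k))]; lra.
    + apply CV_mult; [apply Un_cv_const|].
      apply CV_minus; [apply Un_cv_const | apply Un_cv_div_norm2; assumption].
Qed.

Lemma dphi_cv_quadrant tau (a b : nat -> R) x y :
  Un_cv a x -> Un_cv b y -> x <> 0 \/ y <> 0 -> eventually (fun k => 0 < a k /\ 0 < b k) ->
  eventually (fun k => kink_free (a k) (b k)) /\
  Un_cv (fun k => dphi_a tau (a k) (b k)) (tau * (1 - x / norm2 x y) + (1 - tau) * y) /\
  Un_cv (fun k => dphi_b tau (a k) (b k)) (tau * (1 - y / norm2 x y) + (1 - tau) * x).
Proof.
  intros Ha Hb Hxy Hev. split; [|split].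
  - refine (eventually_mono _ _ _ Hev). unfold kink_free. tauto.
  - apply Un_cv_eventually_eq with (fun k => tau * (1 - a k / norm2 (a k) (b k)) + (1 - tau) * b k).
    + refine (eventually_mono _ _ _ Hev). intros k [Hak Hbk]. unfold dphi_a.
      rewrite step_pos, posp_pos by assumption. ring.
    + apply CV_plus; apply CV_mult; try apply Un_cv_const; [|exact Hb].
      apply CV_minus; [apply Un_cv_const | apply Un_cv_div_norm2; assumption].
  - apply Un_cv_eventually_eq with (fun k => tau * (1 - b k / norm2 (a k) (b k)) + (1 - tau) * a k).
    + refine (eventually_mono _ _ _ Hev). intros k [Hak Hbk]. unfold dphi_b.
      rewrite step_pos, posp_pos by assumption. ring.
    + apply CV_plus; apply CV_mult; try apply Un_cv_const; [|exact Ha].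
      apply CV_minus; [apply Un_cv_const | apply Un_cv_div_norm2; assumption].
Qed.

(* At the origin the direction of approach, not the limit point, determines the limits. *)
Lemma dphi_cv_origin tau (a b e sk : nat -> R) s :
  (forall k, 0 < e k) -> Un_cv sk s -> (forall k, a k = - e k) -> (forall k, b k = - (e k * sk k)) ->
  eventually (fun k => kink_free (a k) (b k)) /\
  Un_cv (fun k => dphi_a tau (a k) (b k)) (tau * (1 + 1 / norm2 1 s)) /\
  Un_cv (fun k => dphi_b tau (a k) (b k)) (tau * (1 + s / norm2 1 s)).
Proof.
  intros He Hs Ha Hb.
  assert (Hneg : forall k, a k < 0) by (intros k; rewrite Ha; specialize (He k); lra).
  assert (Hnorm : forall k, norm2 (a k) (b k) = e k * norm2 1 (sk k)).
  { intros k. unfold norm2. rewrite Ha, Hb.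
    replace ((- e k) ^ 2 + (- (e k * sk k)) ^ 2) with (e k ^ 2 * (1 ^ 2 + sk k ^ 2)) by ring.
    rewrite sqrt_mult_alt, sqrt_pow2 by (specialize (He k); nra). reflexivity. }
  assert (Hn1 : forall t, 0 < norm2 1 t) by (intros; apply norm2_pos; left; lra).
  assert (Hcv : forall u l, Un_cv u l ->
    Un_cv (fun k => tau * (1 + u k / norm2 1 (sk k))) (tau * (1 + l / norm2 1 s))).
  { intros u l Hu. apply CV_mult; [apply Un_cv_const|]. apply CV_plus; [apply Un_cv_const|].
    apply Un_cv_div_norm2; [exact Hu | apply Un_cv_const | exact Hs | left; lra]. }
  split; [|split].
  - apply eventually_of_forall. intros k. left. apply Hneg.
  - apply (Un_cv_ext (fun k => tau * (1 + 1 / norm2 1 (sk k)))); [|apply Hcv, Un_cv_const].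
    intros k. unfold dphi_a. rewrite step_nonpos, Hnorm by (left; apply Hneg).
    rewrite Ha. specialize (He k). specialize (Hn1 (sk k)). field. lra.
  - apply (Un_cv_ext (fun k => tau * (1 + sk k / norm2 1 (sk k)))); [|apply Hcv, Hs].
    intros k. unfold dphi_b. rewrite posp_nonpos, Hnorm by (left; apply Hneg).
    rewrite Hb. specialize (He k). specialize (Hn1 (sk k)). field. lra.
Qed.

(* The entries of [c] and the coefficients of [(e_i^T, 0)] and of [grad F_i(z)^T] in row i
   of Procedure P, as functions of [x = x_i], [y = F_i(z)] and [s = s_i]. *)
Definition cdir (x y : R) : R :=
  if Req_EM_T x 0 then (if Req_EM_T y 0 then 1 else if Rlt_dec 0 y then 1 else 0)
  else if Rlt_dec 0 x then (if Req_EM_T y 0 then 1 else 0) else 0.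

Definition proc_alpha (tau x y s : R) : R :=
  if Req_EM_T x 0 then
    (if Req_EM_T y 0 then tau * (1 + 1 / norm2 1 s) else tau * (1 - x / norm2 x y))
  else if Rlt_dec 0 x then
    (if Req_EM_T y 0 then 0
     else if Rlt_dec 0 y then tau * (1 - x / norm2 x y) + (1 - tau) * y
     else tau * (1 - x / norm2 x y))
  else tau * (1 - x / norm2 x y).

Definition proc_beta (tau x y s : R) : R :=
  if Req_EM_T x 0 then
    (if Req_EM_T y 0 then tau * (1 + s / norm2 1 s) else tau * (1 - y / norm2 x y))
  else if Rlt_dec 0 x then
    (if Req_EM_T y 0 then (if Rlt_dec s 0 then tau + (1 - tau) * x else tau)
     else if Rlt_dec 0 y then tau * (1 - y / norm2 x y) + (1 - tau) * x
     else tau * (1 - y / norm2 x y))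
  else tau * (1 - y / norm2 x y).

Lemma procP_decompose n tau z Fz JF i j :
  procP n tau z Fz JF i j =
  proc_alpha tau (z i) (Fz i) (svec n z Fz JF i) * ecol i j
  + proc_beta tau (z i) (Fz i) (svec n z Fz JF i) * JF i j.
Proof.
  unfold procP, proc_alpha, proc_beta, cvec.
  destruct (Req_EM_T (z i) 0); [destruct (Req_EM_T (Fz i) 0)|]; [ring | ring|].
  destruct (Rlt_dec 0 (z i)); [|ring].
  destruct (Req_EM_T (Fz i) 0); [destruct (Rlt_dec (svec n z Fz JF i) 0); ring|].
  destruct (Rlt_dec 0 (Fz i)); ring.
Qed.

Lemma norm2_x0 x : 0 < x -> norm2 x 0 = x.
Proof. intros Hx. unfold norm2. replace (x ^ 2 + 0 ^ 2) with (x ^ 2) by ring. apply sqrt_pow2. lra. Qed.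

Lemma Un_cv_sub_vanishing x (e u : nat -> R) l :
  Un_cv e 0 -> Un_cv u l -> Un_cv (fun k => x - e k * u k) x.
Proof.
  intros He Hu. apply (Un_cv_limit_eq _ (x - 0 * l)); [|ring].
  apply CV_minus; [apply Un_cv_const | apply CV_mult; assumption].
Qed.

(* On the positive x-axis the sign of s decides on which side of the kink the sequence lies. *)
Lemma dphi_cv_axis tau x s (a b e sk : nat -> R) :
  0 < x -> s <> 0 -> (forall k, 0 < e k) -> Un_cv sk s -> Un_cv a x -> Un_cv b 0 ->
  (forall k, b k = 0 - e k * sk k) ->
  eventually (fun k => kink_free (a k) (b k)) /\
  Un_cv (fun k => dphi_a tau (a k) (b k)) 0 /\
  Un_cv (fun k => dphi_b tau (a k) (b k)) (if Rlt_dec s 0 then tau + (1 - tau) * x else tau).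
Proof.
  intros Hx Hs0 He Hs Ha Hb0 Hb.
  assert (Hxn : x / norm2 x 0 = 1) by (rewrite norm2_x0 by exact Hx; field; lra).
  assert (H0n : 0 / norm2 x 0 = 0) by (unfold Rdiv; ring).
  destruct (Rlt_dec s 0) as [Hsn|Hsp].
  - assert (Hb_pos : eventually (fun k => 0 < b k)).
    { refine (eventually_mono _ _ _ (eventually_neg sk s Hs Hsn)). intros k Hk.
      rewrite Hb. specialize (He k). nra. }
    destruct (dphi_cv_quadrant tau a b x 0 Ha Hb0 (or_introl (Rgt_not_eq _ _ Hx))
               (eventually_and _ _ (eventually_pos a x Ha Hx) Hb_pos)) as (Hk & Hda & Hdb).
    split; [exact Hk | split];
      [apply (Un_cv_limit_eq _ _ _ Hda) | apply (Un_cv_limit_eq _ _ _ Hdb)]; rewrite ?Hxn, ?H0n; ring.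
  - assert (Hb_neg : eventually (fun k => b k < 0)).
    { refine (eventually_mono _ _ _ (eventually_pos sk s Hs _)); [|lra]. intros k Hk.
      rewrite Hb. specialize (He k). nra. }
    destruct (dphi_cv_off_quadrant tau a b x 0 Ha Hb0 (or_introl (Rgt_not_eq _ _ Hx))
               (eventually_mono _ _ (fun k H => or_intror H) Hb_neg)) as (Hk & Hda & Hdb).
    split; [exact Hk | split];
      [apply (Un_cv_limit_eq _ _ _ Hda) | apply (Un_cv_limit_eq _ _ _ Hdb)]; rewrite ?Hxn, ?H0n; ring.
Qed.

Lemma dphi_limits tau x y s (a b e sk : nat -> R) :
  (forall k, 0 < e k) -> Un_cv e 0 -> Un_cv sk s ->
  (forall k, a k = x - cdir x y * e k) -> (forall k, b k = y - e k * sk k) ->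
  (0 < x -> y = 0 -> s <> 0) ->
  eventually (fun k => kink_free (a k) (b k)) /\
  Un_cv (fun k => dphi_a tau (a k) (b k)) (proc_alpha tau x y s) /\
  Un_cv (fun k => dphi_b tau (a k) (b k)) (proc_beta tau x y s).
Proof.
  intros He He0 Hs Ha Hb Hs3.
  assert (Hacv : Un_cv a x).
  { apply (Un_cv_ext (fun k => x - e k * cdir x y)); [intros; rewrite Ha; ring|].
    apply (Un_cv_sub_vanishing x e _ _ He0 (Un_cv_const _)). }
  assert (Hbcv : Un_cv b y).
  { apply (Un_cv_ext (fun k => y - e k * sk k)); [intros; symmetry; apply Hb|].
    apply (Un_cv_sub_vanishing y e _ _ He0 Hs). }
  unfold proc_alpha, proc_beta. unfold cdir in Ha.
  destruct (Req_EM_T x 0) as [Hx0|Hx0]; [|destruct (Rlt_dec 0 x) as [Hxp|Hxn]].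
  - destruct (Req_EM_T y 0) as [Hy0|Hy0].
    + apply (dphi_cv_origin tau a b e sk s He Hs); intros k; [rewrite Ha | rewrite Hb]; subst; ring.
    + apply dphi_cv_off_quadrant; [assumption | assumption | right; assumption|].
      destruct (Rlt_dec 0 y) as [Hyp|Hyn].
      * apply eventually_of_forall. intros k. left. rewrite Ha. specialize (He k). lra.
      * refine (eventually_mono _ _ _ (eventually_neg b y Hbcv _)); [tauto | lra].
  - destruct (Req_EM_T y 0) as [Hy0|Hy0]; [|destruct (Rlt_dec 0 y) as [Hyp|Hyn]].
    + subst y. apply (dphi_cv_axis tau x s a b e sk); auto.
    + apply dphi_cv_quadrant; [assumption | assumption | left; assumption|].
      apply eventually_and; [apply (eventually_pos a x) | apply (eventually_pos b y)]; assumption.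
    + apply dphi_cv_off_quadrant; [assumption | assumption | left; assumption|].
      refine (eventually_mono _ _ _ (eventually_neg b y Hbcv _)); [tauto | lra].
  - apply dphi_cv_off_quadrant; [assumption | assumption | left; assumption|].
    apply eventually_of_forall. intros k. left. rewrite Ha. lra.
Qed.

(** * The approximating sequence *)

Lemma Fmap_has_slope m n A B i : has_slope_on (fun _ => True) (n + 1) (fun w => Fmap m n A B w i).
Proof.
  assert (Htapp : forall T, has_slope_on (fun _ => True) (n + 1) (fun w => tapp m n T w i)).
  { intros T. unfold tapp.
    apply (has_slope_on_tsum _ _ n (m - 1) (fun l w => T (i :: l) * prodx w l)). intros l Hl.
    destruct (has_slope_on_prodx (fun _ => True) (n + 1) l) as [Q HQ].
    { eapply Forall_impl; [|exact Hl]. simpl. intros; lia. }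
    eexists. apply (slope_on_mult _ _ (fun _ => T (i :: l))); [apply slope_on_const | exact HQ]. }
  destruct (Htapp A) as [QA HA], (Htapp B) as [QB HB].
  eexists. apply (slope_on_ext _ _ _ (fun w => w n * (w n * 1) * tapp m n B w i + -1 * tapp m n A w i)).
  { intros w. unfold Fmap. ring. }
  apply slope_on_plus; apply slope_on_mult; try eassumption; [|apply slope_on_const].
  apply slope_on_mult; [|apply slope_on_mult; [|apply slope_on_const]]; apply slope_on_coord; lia.
Qed.

Section Approximation.

Variables (m n : nat) (A B : tensor) (tau : R) (z : nat -> R) (JF : nat -> nat -> R)
  (QF : nat -> (nat -> R) -> (nat -> R) -> nat -> R).

Local Notation F := (Fmap m n A B).

Hypothesis HQF : forall i, slope_on (fun _ => True) (n + 1) (fun w => F w i) (QF i).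
Hypothesis HJF : jac_at n (n + 1) F z JF.
Hypothesis HS3 : forall i, (i < n)%nat -> 0 < z i -> F z i = 0 -> svec n z (F z) JF i <> 0.

Definition zseq (k j : nat) : R := if (j <? n)%nat then z j - cdir (z j) (F z j) * RinvN k else z j.

Definition sseq (i k : nat) : R := rsum n (fun j => cdir (z j) (F z j) * QF i z (zseq k) j).

Definition Hjac (v : nat -> R) (i j : nat) : R :=
  if (i <? n)%nat then dphi_a tau (v i) (F v i) * ecol i j + dphi_b tau (v i) (F v i) * QF i v v j
  else if (j <? n)%nat then 2 * v j else 0.

Lemma QF_diag_eq_JF i j : (i < n)%nat -> (j < n + 1)%nat -> QF i z z j = JF i j.
Proof.
  intros Hi Hj. apply (grad_at_unique (n + 1) (fun w => F w i) z);
    [|apply (jac_at_row n); assumption | exact Hj].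
  apply (slope_on_grad_at (fun _ => True)); [apply HQF | exact I].
Qed.

Lemma zseq_cv : vec_cv (n + 1) zseq z.
Proof.
  intros j _. unfold zseq. destruct (j <? n)%nat; [|apply Un_cv_const].
  apply (Un_cv_ext (fun k => z j - RinvN k * cdir (z j) (F z j))); [intros; ring|].
  apply (Un_cv_sub_vanishing _ _ _ _ RinvN_cv (Un_cv_const _)).
Qed.

Lemma Fmap_zseq i k : F (zseq k) i = F z i - RinvN k * sseq i k.
Proof.
  pose proof (proj1 (HQF i) z (zseq k) I) as Hid.
  rewrite Nat.add_1_r in Hid. cbn [rsum] in Hid.
  assert (Hlast : zseq k n = z n) by (unfold zseq; rewrite Nat.ltb_irrefl; reflexivity).
  rewrite Hlast, Rminus_diag, Rmult_0_l, Rplus_0_r in Hid.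
  unfold sseq. rewrite <- rsum_scal.
  assert (Hsum : rsum n (fun j => (zseq k j - z j) * QF i z (zseq k) j)
               = rsum n (fun j => - RinvN k * (cdir (z j) (F z j) * QF i z (zseq k) j))).
  { apply rsum_ext. intros j Hj. unfold zseq. rewrite (proj2 (Nat.ltb_lt j n) Hj). ring. }
  rewrite Hsum in Hid. rewrite rsum_scal in *. lra.
Qed.

Lemma sseq_cv i : (i < n)%nat -> Un_cv (sseq i) (svec n z (F z) JF i).
Proof.
  intros Hi. apply (Un_cv_limit_eq _ (rsum n (fun j => cdir (z j) (F z j) * QF i z z j))).
  - apply Un_cv_rsum. intros j Hj. apply CV_mult; [apply Un_cv_const|].
    apply (proj2 (HQF i) z (fun _ => z) zseq I (fun _ => I));
      [intros l _; apply Un_cv_const | apply zseq_cv | lia].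
  - apply rsum_ext. intros j Hj. rewrite QF_diag_eq_JF by lia. apply Rmult_comm.
Qed.

Lemma Hmap_jac_at v : (forall i, (i < n)%nat -> kink_free (v i) (F v i)) ->
  jac_at (n + 1) (n + 1) (Hmap m n A B tau) v (Hjac v).
Proof.
  intros Hkink. apply jac_at_of_rows. intros i Hi. destruct (Nat.ltb_spec i n) as [Hin|Hin].
  - apply grad_at_local with (fun w => phi tau (w i) (F w i)).
    + eapply grad_at_ext; [|apply (phi_grad_at (fun _ => True) (n + 1) tau (fun w => w i) (fun w => F w i));
        [apply slope_on_coord; lia | apply HQF | exact I | apply Hkink, Hin]].
      intros j _. unfold Hjac. rewrite (proj2 (Nat.ltb_lt i n) Hin). reflexivity.
    + exists 1. split; [lra|]. intros w _. unfold Hmap. rewrite (proj2 (Nat.ltb_lt i n) Hin). reflexivity.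
  - replace i with n by lia.
    apply grad_at_local with (fun w => rsum n (fun j => w j ^ 2) + -1).
    + eapply grad_at_ext; [|apply (slope_on_grad_at (fun _ => True));
        [apply slope_on_plus; [apply slope_on_sumsq; lia | apply slope_on_const] | exact I]].
      intros j _. unfold Hjac. rewrite Nat.ltb_irrefl. destruct (j <? n)%nat; ring.
    + exists 1. split; [lra|]. intros w _. unfold Hmap. rewrite Nat.ltb_irrefl. ring.
Qed.

Lemma zseq_limits :
  eventually (fun k => forall i, (i < n)%nat -> kink_free (zseq k i) (F (zseq k) i)) /\
  forall i j, (i < n + 1)%nat -> (j < n + 1)%nat ->
    Un_cv (fun k => Hjac (zseq k) i j) (Gmat n (procP n tau z (F z) JF) z i j).
Proof.
  assert (Hrow : forall i, (i < n)%nat ->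
    eventually (fun k => kink_free (zseq k i) (F (zseq k) i)) /\
    Un_cv (fun k => dphi_a tau (zseq k i) (F (zseq k) i))
          (proc_alpha tau (z i) (F z i) (svec n z (F z) JF i)) /\
    Un_cv (fun k => dphi_b tau (zseq k i) (F (zseq k) i))
          (proc_beta tau (z i) (F z i) (svec n z (F z) JF i))).
  { intros i Hi. apply (dphi_limits _ _ _ _ _ _ (fun k => RinvN k) (sseq i)).
    - intros k. apply cond_pos.
    - exact RinvN_cv.
    - apply sseq_cv, Hi.
    - intros k. unfold zseq. rewrite (proj2 (Nat.ltb_lt i n) Hi). reflexivity.
    - intros k. apply Fmap_zseq.
    - apply HS3, Hi. }
  split.
  - apply eventually_forall_lt. intros i Hi. apply Hrow, Hi.
  - intros i j Hi Hj. unfold Gmat, Hjac. destruct (Nat.ltb_spec i n) as [Hin|Hin].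
    + rewrite procP_decompose. destruct (Hrow i Hin) as (_ & Ha & Hb).
      apply CV_plus; apply CV_mult; [exact Ha | apply Un_cv_const | exact Hb|].
      rewrite <- QF_diag_eq_JF by assumption.
      apply (proj2 (HQF i) z zseq zseq I (fun _ => I)); [apply zseq_cv | apply zseq_cv | exact Hj].
    + destruct (j <? n)%nat; [|apply Un_cv_const].
      apply CV_mult; [apply Un_cv_const | apply zseq_cv, Hj].
Qed.

End Approximation.

Theorem theorem2 (m n : nat) (A B : tensor) (tau : R) (z : nat -> R)
  (JF : nat -> nat -> R) :
  Nat.Even m -> (2 <= m)%nat ->
  sym_tensor m n B -> posdef_tensor m n B ->
  0 < tau < 1 ->
  jac_at n (n + 1) (Fmap m n A B) z JF ->
  (forall i, (i < n)%nat -> 0 < z i -> Fmap m n A B z i = 0 ->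
     svec n z (Fmap m n A B z) JF i <> 0) ->
  in_B_subdiff (n + 1) (n + 1) (Hmap m n A B tau) z
    (Gmat n (procP n tau z (Fmap m n A B z) JF) z).
Proof.
  intros _ _ _ _ _ HJF HS3.
  destruct (functional_choice (fun i Q => slope_on (fun _ => True) (n + 1) (fun w => Fmap m n A B w i) Q)
              (Fmap_has_slope m n A B)) as [QF HQF].
  destruct (zseq_limits m n A B tau z JF QF HQF HJF HS3) as [[K HK] Hlim].
  exists (fun k => zseq m n A B z (k + K)), (fun k => Hjac m n A B tau QF (zseq m n A B z (k + K))).
  split; [|split].
  - intros k. apply Hmap_jac_at; [exact HQF|]. apply HK. lia.
  - intros j Hj. apply (CV_shift' (fun k => zseq m n A B z k j)), zseq_cv, Hj.
  - intros i j Hi Hj.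
    apply (CV_shift' (fun k => Hjac m n A B tau QF (zseq m n A B z k) i j)), Hlim; assumption.
Qed.
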